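(* There exists $n_0$ such that the following holds for all $n\ge n_0$. Let $G$ be a simple connected graph on $n$ vertices with $\lambda_1(G)=\alpha(n)$, and let $f$ be a harmonic eigenfunction for $\lambda_1(G)$. Then every edge $wz$ with $f(w)<0\le f(z)$ is a bridge of $G$, i.e. $G$ minus that edge is disconnected.
   Context: For a connected simple graph $G$ with degree function $d$, \[ \lambda_1(G)=\inf_{f\neq 0,\ \sum_u f(u)d(u)=0}\frac{\sum_{u\sim v}(f(u)-f(v))^2}{\sum_v f(v)^2 d(v)}, \] where the numerator sums over edges. This is the second smallest eigenvalue of the normalized Laplacian. A harmonic eigenfunction is a nonzero $f$ with $\sum_u f(u)d(u)=0$ attaining the infimum. Also, \[ \alpha(n)=\min\{\lambda_1(G): G\text{ simple connected on } n\text{ vertices}\}. \] *)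

From Stdlib Require Import Reals Lra Lia Arith Bool ClassicalEpsilon.
Open Scope R_scope.

(* A graph on n vertices: vertex set {0,...,n-1}, adjacency adj : nat -> nat -> bool
   (only its values on vertices < n matter). *)

Definition simple_graph (n : nat) (adj : nat -> nat -> bool) : Prop :=
  (forall u v, (u < n)%nat -> (v < n)%nat -> adj u v = adj v u) /\
  (forall u, (u < n)%nat -> adj u u = false).

Inductive reach (n : nat) (adj : nat -> nat -> bool) : nat -> nat -> Prop :=
  | reach_refl : forall u, (u < n)%nat -> reach n adj u u
  | reach_step : forall u v w, reach n adj u v -> (w < n)%nat -> adj v w = true ->
                   reach n adj u w.

Definition connected (n : nat) (adj : nat -> nat -> bool) : Prop :=
  forall u v, (u < n)%nat -> (v < n)%nat -> reach n adj u v.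

Definition remove_edge (adj : nat -> nat -> bool) (w z : nat) : nat -> nat -> bool :=
  fun a b => adj a b && negb (((a =? w) && (b =? z)) || ((a =? z) && (b =? w)))%bool.

Fixpoint rsum (n : nat) (g : nat -> R) : R :=
  match n with
  | O => 0
  | S m => rsum m g + g m
  end.

Definition deg (n : nat) (adj : nat -> nat -> bool) (u : nat) : R :=
  rsum n (fun v => if adj u v then 1 else 0).

Definition edge_energy (n : nat) (adj : nat -> nat -> bool) (f : nat -> R) : R :=
  rsum n (fun u => rsum n (fun v =>
    if ((u <? v)%nat && adj u v)%bool then (f u - f v) ^ 2 else 0)).

Definition weighted_norm (n : nat) (adj : nat -> nat -> bool) (f : nat -> R) : R :=
  rsum n (fun v => (f v) ^ 2 * deg n adj v).

Definition degree_orth (n : nat) (adj : nat -> nat -> bool) (f : nat -> R) : Prop :=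
  rsum n (fun u => f u * deg n adj u) = 0.

Definition nonzero_fun (n : nat) (f : nat -> R) : Prop :=
  exists v, (v < n)%nat /\ f v <> 0.

Definition rayleigh (n : nat) (adj : nat -> nat -> bool) (f : nat -> R) : R :=
  edge_energy n adj f / weighted_norm n adj f.

Definition rayleigh_set (n : nat) (adj : nat -> nat -> bool) (r : R) : Prop :=
  exists f, nonzero_fun n f /\ degree_orth n adj f /\ r = rayleigh n adj f.

Definition is_inf (S : R -> Prop) (l : R) : Prop :=
  (forall r, S r -> l <= r) /\ (forall m, (forall r, S r -> m <= r) -> m <= l).

Definition lambda1 (n : nat) (adj : nat -> nat -> bool) : R :=
  epsilon (inhabits 0) (fun l => is_inf (rayleigh_set n adj) l).

Definition harmonic (n : nat) (adj : nat -> nat -> bool) (f : nat -> R) : Prop :=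
  nonzero_fun n f /\ degree_orth n adj f /\ rayleigh n adj f = lambda1 n adj.

Definition alpha (n : nat) : R :=
  epsilon (inhabits 0) (fun a =>
    (exists adj, simple_graph n adj /\ connected n adj /\ a = lambda1 n adj) /\
    (forall adj, simple_graph n adj -> connected n adj -> a <= lambda1 n adj)).

From Stdlib Require Import Reals Lra Lia Arith Bool List ClassicalEpsilon
  FunctionalExtensionality PropExtensionality.
Import ListNotations.
Open Scope R_scope.

(* Removing an edge [wz] across which a harmonic eigenfunction [f] changes sign lowers
   the energy of [f] by [(f w - f z)^2 >= f w^2 + f z^2], while the weighted norm of [f],
   recentred to be orthogonal to the degrees of [G - wz], drops by at most
   [2 (f w^2 + f z^2)].  So if [lambda1 G < 1/2] and [G - wz] is still connected, then
   [lambda1 (G - wz) < lambda1 G].  For [n >= 10] the path has [lambda1 <= 2/5] (test the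
   indicator of a cut with volume at least [5] on each side), so [alpha n < 1/2]; and
   [alpha n] is attained, there being finitely many graphs on [n] vertices.  Hence at a
   minimiser [G - wz] cannot be connected. *)

Lemma rsum_ext n g h : (forall i, (i < n)%nat -> g i = h i) -> rsum n g = rsum n h.
Proof.
  induction n as [|n IH]; intros E; simpl; auto.
  rewrite IH by (intros; apply E; lia). rewrite E by lia. reflexivity.
Qed.

Lemma rsum_plus n g h : rsum n (fun i => g i + h i) = rsum n g + rsum n h.
Proof. induction n; simpl; [lra | rewrite IHn; lra]. Qed.

Lemma rsum_minus n g h : rsum n (fun i => g i - h i) = rsum n g - rsum n h.
Proof. induction n; simpl; [lra | rewrite IHn; lra]. Qed.

Lemma rsum_scal n c g : rsum n (fun i => c * g i) = c * rsum n g.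
Proof. induction n; simpl; [lra | rewrite IHn; lra]. Qed.

Lemma rsum_zero n : rsum n (fun _ => 0) = 0.
Proof. induction n; simpl; [lra | rewrite IHn; lra]. Qed.

Lemma rsum_const1 n : rsum n (fun _ => 1) = INR n.
Proof. induction n; simpl rsum; [simpl; lra | rewrite IHn, S_INR; lra]. Qed.

Lemma rsum_le n g h : (forall i, (i < n)%nat -> g i <= h i) -> rsum n g <= rsum n h.
Proof.
  induction n as [|n IH]; intros H; simpl; [lra |].
  assert (g n <= h n) by (apply H; lia).
  assert (rsum n g <= rsum n h) by (apply IH; intros; apply H; lia). lra.
Qed.

Lemma rsum_nonneg n g : (forall i, (i < n)%nat -> 0 <= g i) -> 0 <= rsum n g.
Proof. intros H. rewrite <- (rsum_zero n). apply rsum_le, H. Qed.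

Lemma rsum_ge_term n g k :
  (forall i, (i < n)%nat -> 0 <= g i) -> (k < n)%nat -> g k <= rsum n g.
Proof.
  induction n as [|n IH]; intros H Hk; [lia |]. simpl.
  assert (0 <= g n) by (apply H; lia).
  destruct (Nat.eq_dec k n) as [-> | Hne].
  - assert (0 <= rsum n g) by (apply rsum_nonneg; intros; apply H; lia). lra.
  - assert (g k <= rsum n g) by (apply IH; [intros; apply H |]; lia). lra.
Qed.

Lemma rsum_delta n k g :
  (k < n)%nat -> rsum n (fun i => if (i =? k)%nat then g i else 0) = g k.
Proof.
  induction n as [|n IH]; intros Hk; [lia |]. simpl.
  destruct (Nat.eq_dec k n) as [-> | Hne].
  - rewrite Nat.eqb_refl, (rsum_ext n _ (fun _ => 0)), rsum_zero; [lra |].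
    intros i Hi. destruct (Nat.eqb_spec i n); [lia | auto].
  - rewrite IH by lia. destruct (Nat.eqb_spec n k); [lia | lra].
Qed.

Lemma rsum_if n (b : bool) g :
  rsum n (fun i => if b then g i else 0) = if b then rsum n g else 0.
Proof. destruct b; [auto | apply rsum_zero]. Qed.

Lemma Rdiv_nonneg a b : 0 <= a -> 0 <= b -> 0 <= a / b.
Proof.
  intros Ha Hb. destruct (Req_dec b 0) as [-> | Hb'].
  - unfold Rdiv. rewrite Rinv_0. lra.
  - apply Rmult_le_pos; [lra | apply Rlt_le, Rinv_0_lt_compat; lra].
Qed.

Definition vol n adj := rsum n (deg n adj).
Definition deg_sum n adj f := rsum n (fun u => f u * deg n adj u).

Lemma edge_energy_nonneg n adj f : 0 <= edge_energy n adj f.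
Proof.
  apply rsum_nonneg; intros. apply rsum_nonneg; intros.
  destruct (_ && _); [apply pow2_ge_0 | lra].
Qed.

Lemma deg_nonneg n adj u : 0 <= deg n adj u.
Proof. apply rsum_nonneg; intros. destruct (adj u i); lra. Qed.

Lemma weighted_norm_pos n adj f :
  (forall u, (u < n)%nat -> 1 <= deg n adj u) -> nonzero_fun n f ->
  0 < weighted_norm n adj f.
Proof.
  intros Hd [v [Hv Hf]].
  assert (T : f v ^ 2 * deg n adj v <= weighted_norm n adj f).
  { apply (rsum_ge_term n (fun v => f v ^ 2 * deg n adj v)); auto.
    intros. apply Rmult_le_pos; [apply pow2_ge_0 | apply deg_nonneg]. }
  assert (0 < f v ^ 2) by (simpl; nra). pose proof (Hd v Hv). nra.
Qed.

Lemma rayleigh_nonneg n adj f : 0 <= rayleigh n adj f.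
Proof.
  apply Rdiv_nonneg; [apply edge_energy_nonneg |].
  apply rsum_nonneg; intros. apply Rmult_le_pos; [apply pow2_ge_0 | apply deg_nonneg].
Qed.

(** * The infimum [lambda1] *)

(* The epsilon in [lambda1] is harmless as soon as some admissible quotient exists:
   the quotients are bounded below by [0], so the infimum exists by completeness. *)
Lemma lambda1_is_inf n adj :
  (exists r, rayleigh_set n adj r) -> is_inf (rayleigh_set n adj) (lambda1 n adj).
Proof.
  intros [r0 Hr0]. unfold lambda1. apply epsilon_spec.
  set (E := fun x => rayleigh_set n adj (- x)).
  assert (HB : bound E).
  { exists 0. intros x [f [_ [_ Hx]]]. pose proof (rayleigh_nonneg n adj f). lra. }
  assert (HE : exists x, E x) by (exists (- r0); unfold E; rewrite Ropp_involutive; auto).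
  destruct (completeness E HB HE) as [m [Hub Hlub]].
  exists (- m). split.
  - intros r Hr. assert (E (- r)) by (unfold E; rewrite Ropp_involutive; auto).
    pose proof (Hub _ H). lra.
  - intros l Hl. assert (m <= - l) by (apply Hlub; intros x Hx; pose proof (Hl _ Hx); lra). lra.
Qed.

Lemma lambda1_le_rayleigh n adj f :
  nonzero_fun n f -> degree_orth n adj f -> lambda1 n adj <= rayleigh n adj f.
Proof.
  intros Hnz Ho. assert (Hs : rayleigh_set n adj (rayleigh n adj f)) by (exists f; auto).
  apply (lambda1_is_inf n adj (ex_intro _ _ Hs)); auto.
Qed.

(* Test functions need not be orthogonal to the degrees: subtracting the constant
   [deg_sum / vol] makes them so without changing the energy. *)
Definition centered n adj f : nat -> R := fun u => f u - deg_sum n adj f / vol n adj.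

Lemma degree_orth_centered n adj f : 0 < vol n adj -> degree_orth n adj (centered n adj f).
Proof.
  intros HV. unfold degree_orth, centered.
  rewrite (rsum_ext n _ (fun u => f u * deg n adj u - deg_sum n adj f / vol n adj * deg n adj u))
    by (intros; ring).
  rewrite rsum_minus, rsum_scal. fold (deg_sum n adj f) (vol n adj). field. lra.
Qed.

Lemma nonzero_centered n adj f i j :
  (i < n)%nat -> (j < n)%nat -> f i <> f j -> nonzero_fun n (centered n adj f).
Proof.
  intros Hi Hj Hf. unfold centered.
  destruct (Req_dec (f i) (deg_sum n adj f / vol n adj)); [exists j | exists i]; split; auto; lra.
Qed.

Lemma edge_energy_centered n adj f :
  edge_energy n adj (centered n adj f) = edge_energy n adj f.
Proof.
  apply rsum_ext; intros. apply rsum_ext; intros. unfold centered.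
  destruct (_ && _); [ring | auto].
Qed.

Lemma weighted_norm_centered n adj f : 0 < vol n adj ->
  weighted_norm n adj (centered n adj f) =
  weighted_norm n adj f - deg_sum n adj f ^ 2 / vol n adj.
Proof.
  intros HV. unfold weighted_norm, centered. set (c := deg_sum n adj f / vol n adj).
  rewrite (rsum_ext n _ (fun u => (f u ^ 2 * deg n adj u - (2 * c) * (f u * deg n adj u))
                                 + c ^ 2 * deg n adj u)) by (intros; ring).
  rewrite rsum_plus, rsum_minus, !rsum_scal. fold (deg_sum n adj f) (vol n adj).
  unfold c. field. lra.
Qed.

Lemma lambda1_le_centered n adj f i j :
  0 < vol n adj -> (i < n)%nat -> (j < n)%nat -> f i <> f j ->
  lambda1 n adj <=
  edge_energy n adj f / (weighted_norm n adj f - deg_sum n adj f ^ 2 / vol n adj).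
Proof.
  intros HV Hi Hj Hf.
  rewrite <- edge_energy_centered, <- weighted_norm_centered by exact HV.
  apply lambda1_le_rayleigh; [exact (nonzero_centered n adj f i j Hi Hj Hf) |].
  apply degree_orth_centered, HV.
Qed.

Definition agree_on n (a b : nat -> nat -> bool) :=
  forall u v, (u < n)%nat -> (v < n)%nat -> a u v = b u v.

Lemma deg_agree n a b u : agree_on n a b -> (u < n)%nat -> deg n a u = deg n b u.
Proof. intros H Hu. apply rsum_ext; intros. rewrite H; auto. Qed.

Lemma lambda1_agree n a b : agree_on n a b -> lambda1 n a = lambda1 n b.
Proof.
  intros H.
  assert (HE : forall f, edge_energy n a f = edge_energy n b f).
  { intros f. apply rsum_ext; intros. apply rsum_ext; intros. rewrite H; auto. }
  assert (HN : forall f, weighted_norm n a f = weighted_norm n b f).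
  { intros f. apply rsum_ext; intros. rewrite (deg_agree n a b); auto. }
  assert (HO : forall f, degree_orth n a f <-> degree_orth n b f).
  { intros f. unfold degree_orth.
    rewrite (rsum_ext n _ (fun u => f u * deg n b u)); [tauto |].
    intros; rewrite (deg_agree n a b); auto. }
  assert (HS : rayleigh_set n a = rayleigh_set n b).
  { apply functional_extensionality; intros r. apply propositional_extensionality.
    unfold rayleigh_set, rayleigh.
    split; intros [f Hf]; exists f; rewrite ?HE, ?HN, ?HO in *; rewrite <- ?HE, <- ?HN, <- ?HO in *;
      tauto. }
  unfold lambda1. rewrite HS. reflexivity.
Qed.

Lemma reach_lt n a u v : reach n a u v -> (u < n)%nat /\ (v < n)%nat.
Proof. induction 1; tauto. Qed.

Lemma reach_agree n a b u v : agree_on n a b -> reach n a u v -> reach n b u v.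
Proof.
  intros H. induction 1 as [u Hu | u v w Hr IH Hw Hvw].
  - constructor; auto.
  - apply reach_step with v; auto. apply reach_lt in Hr. rewrite <- H; tauto.
Qed.

Lemma simple_connected_agree n a b :
  agree_on n a b -> simple_graph n a -> connected n a ->
  simple_graph n b /\ connected n b.
Proof.
  intros H [Sy Ir] C. repeat split.
  - intros; rewrite <- !H; auto.
  - intros; rewrite <- H; auto.
  - intros u v Hu Hv. apply reach_agree with a; auto.
Qed.

Lemma deg_ge1_connected n adj u :
  simple_graph n adj -> connected n adj -> (2 <= n)%nat -> (u < n)%nat -> 1 <= deg n adj u.
Proof.
  intros [Sy _] C Hn Hu. set (v := if (u =? 0)%nat then 1%nat else 0%nat).
  assert (Hv : (v < n)%nat /\ v <> u) by (unfold v; destruct (Nat.eqb_spec u 0); lia).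
  assert (R : reach n adj v u) by (apply C; tauto).
  inversion R as [| a x b Hr Hb Hadj]; [lia |]. subst.
  apply reach_lt in Hr. rewrite Sy in Hadj by tauto.
  pose proof (rsum_ge_term n (fun v => if adj u v then 1 else 0) x) as T.
  cbv beta in T. rewrite Hadj in T. apply T; [| tauto].
  intros; destruct (adj u i); lra.
Qed.

(** * Existence of the minimum [alpha] *)

Definition upd (g : nat -> bool) k b : nat -> bool := fun i => if (i =? k)%nat then b else g i.

Fixpoint bool_prefixes (k : nat) : list (nat -> bool) :=
  match k with
  | O => [fun _ => false]
  | S k => flat_map (fun g => [upd g k false; upd g k true]) (bool_prefixes k)
  end.

Lemma bool_prefixes_complete k g :
  exists h, In h (bool_prefixes k) /\ forall i, (i < k)%nat -> h i = g i.
Proof.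
  induction k as [|k [h [Hin Hh]]].
  - exists (fun _ => false). split; [left; auto | intros; lia].
  - exists (upd h k (g k)). split.
    + apply in_flat_map. exists h. split; auto. destruct (g k); simpl; auto.
    + intros i Hi. unfold upd. destruct (Nat.eqb_spec i k); [congruence | apply Hh; lia].
Qed.

Lemma list_argmin {A} (F : A -> R) (P : A -> Prop) l :
  (exists x, In x l /\ P x) -> exists x0, P x0 /\ forall x, In x l -> P x -> F x0 <= F x.
Proof.
  induction l as [|a l IH]; intros [x [Hx Px]]; [destruct Hx |].
  destruct (classic (exists y, In y l /\ P y)) as [Hl | Hl].
  - destruct (IH Hl) as [x0 [P0 H0]].
    destruct (Rlt_dec (F a) (F x0)) as [Ha | Ha]; [destruct (classic (P a)) as [Pa | Pa] |].
    + exists a. split; auto. intros y [<- | Hy] Py; [lra |]. pose proof (H0 y Hy Py). lra.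
    + exists x0. split; auto. intros y [<- | Hy] Py; [contradiction | auto].
    + exists x0. split; auto. intros y [<- | Hy] Py; [lra | auto].
  - destruct Hx as [<- | Hx]; [| exfalso; eauto].
    exists a. split; auto. intros y [<- | Hy] Py; [lra | exfalso; eauto].
Qed.

Lemma exists_argmin_bool_prefix k (F : (nat -> bool) -> R) (P : (nat -> bool) -> Prop) :
  (forall g h, (forall i, (i < k)%nat -> g i = h i) -> F g = F h /\ (P g -> P h)) ->
  (exists g, P g) -> exists g0, P g0 /\ forall g, P g -> F g0 <= F g.
Proof.
  intros Hinv [g1 Pg1].
  destruct (list_argmin F P (bool_prefixes k)) as [g0 [P0 H0]].
  - destruct (bool_prefixes_complete k g1) as [h [Hin Hh]].
    exists h. split; auto. apply (Hinv g1 h); auto. intros; symmetry; auto.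
  - exists g0. split; auto. intros g Pg.
    destruct (bool_prefixes_complete k g) as [h [Hin Hh]].
    destruct (Hinv g h) as [Fgh Pgh]; [intros; symmetry; auto |].
    rewrite Fgh. apply H0; auto.
Qed.

Definition adj_of_code n (g : nat -> bool) : nat -> nat -> bool := fun u v => g (u * n + v)%nat.
Definition code_of_adj n (adj : nat -> nat -> bool) : nat -> bool :=
  fun i => adj (i / n)%nat (i mod n)%nat.

Lemma adj_of_code_of_adj n adj : agree_on n adj (adj_of_code n (code_of_adj n adj)).
Proof.
  intros u v Hu Hv. unfold adj_of_code, code_of_adj.
  rewrite <- (Nat.div_unique (u * n + v) n u v), <- (Nat.mod_unique (u * n + v) n u v) by lia.
  reflexivity.
Qed.

Lemma alpha_le_lambda1 n adj :
  simple_graph n adj -> connected n adj -> alpha n <= lambda1 n adj.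
Proof.
  intros S0 C0.
  set (P := fun g => simple_graph n (adj_of_code n g) /\ connected n (adj_of_code n g)).
  assert (Pcode : forall b, simple_graph n b -> connected n b -> P (code_of_adj n b)).
  { intros b Sb Cb. exact (simple_connected_agree n _ _ (adj_of_code_of_adj n b) Sb Cb). }
  unfold alpha.
  match goal with |- epsilon _ ?Q <= _ => enough (Hex : exists a, Q a)
    by exact (proj2 (epsilon_spec (inhabits 0) Q Hex) adj S0 C0) end.
  destruct (exists_argmin_bool_prefix (n * n) (fun g => lambda1 n (adj_of_code n g)) P)
    as [g0 [[Sg Cg] Hg]].
  - intros g h H. assert (A : agree_on n (adj_of_code n g) (adj_of_code n h)).
    { intros u v Hu Hv. apply H. nia. }
    split; [apply lambda1_agree; auto |].
    intros [Sg Cg]. exact (simple_connected_agree n _ _ A Sg Cg).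
  - exists (code_of_adj n adj). auto.
  - exists (lambda1 n (adj_of_code n g0)). split; [exists (adj_of_code n g0); auto |].
    intros b Sb Cb. rewrite (lambda1_agree n _ _ (adj_of_code_of_adj n b)).
    apply Hg, Pcode; auto.
Qed.

(** * The path graph *)

Definition indicator (A : nat -> bool) (u : nat) : R := if A u then 1 else 0.

Lemma lambda1_le_cut n adj A i j :
  (i < n)%nat -> (j < n)%nat -> A i = true -> A j = false ->
  0 < deg_sum n adj (indicator A) -> 0 < vol n adj - deg_sum n adj (indicator A) ->
  lambda1 n adj <=
  edge_energy n adj (indicator A) *
  (1 / deg_sum n adj (indicator A) + 1 / (vol n adj - deg_sum n adj (indicator A))).
Proof.
  intros Hi Hj Ai Aj Hx Ht.
  assert (Hf : indicator A i <> indicator A j) by (unfold indicator; rewrite Ai, Aj; lra).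
  pose proof (lambda1_le_centered n adj _ i j ltac:(lra) Hi Hj Hf) as H.
  assert (HN : weighted_norm n adj (indicator A) = deg_sum n adj (indicator A)).
  { apply rsum_ext; intros. unfold indicator. destruct (A i0); ring. }
  rewrite HN in H. set (x := deg_sum n adj (indicator A)) in *.
  replace (vol n adj) with (x + (vol n adj - x)) in H by ring.
  set (t := vol n adj - x) in *.
  replace (x - x ^ 2 / (x + t)) with (1 / (1 / x + 1 / t)) in H by (field; lra).
  replace (edge_energy n adj (indicator A) * (1 / x + 1 / t))
    with (edge_energy n adj (indicator A) / (1 / (1 / x + 1 / t))) by (field; split; lra).
  exact H.
Qed.

Definition path_adj : nat -> nat -> bool := fun u v => ((S u =? v) || (S v =? u))%nat.

Lemma path_simple n : simple_graph n path_adj.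
Proof.
  split; intros; unfold path_adj; [apply orb_comm |].
  destruct (Nat.eqb_spec (S u) u); [lia | auto].
Qed.

Lemma path_connected n : connected n path_adj.
Proof.
  assert (Hup : forall u k, (u + k < n)%nat -> reach n path_adj u (u + k)).
  { induction k; intros H; [rewrite Nat.add_0_r; constructor; lia |].
    apply reach_step with (u + k)%nat; [apply IHk; lia | lia |].
    unfold path_adj. destruct (Nat.eqb_spec (S (u + k)) (u + S k)); [auto | lia]. }
  assert (Hdown : forall u k, (k <= u)%nat -> (u < n)%nat -> reach n path_adj u (u - k)).
  { induction k; intros H H'; [rewrite Nat.sub_0_r; constructor; lia |].
    apply reach_step with (u - k)%nat; [apply IHk; lia | lia |].
    unfold path_adj. destruct (Nat.eqb_spec (S (u - S k)) (u - k)); [apply orb_true_r | lia]. }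
  intros u v Hu Hv. destruct (le_lt_dec u v).
  - replace v with (u + (v - u))%nat by lia. apply Hup; lia.
  - replace v with (u - (u - v))%nat by lia. apply Hdown; lia.
Qed.

Definition path_cut (u : nat) : bool := (5 <=? u)%nat.

Lemma path_cut_energy n : (6 <= n)%nat -> edge_energy n path_adj (indicator path_cut) = 1.
Proof.
  intros Hn. unfold edge_energy.
  rewrite (rsum_ext n _ (fun u => if (u =? 4)%nat then 1 else 0)).
  - apply (rsum_delta n 4 (fun _ => 1)). lia.
  - intros u Hu.
    rewrite (rsum_ext n _ (fun v => if (u =? 4)%nat then (if (v =? 5)%nat then 1 else 0) else 0)).
    + rewrite rsum_if. destruct (u =? 4)%nat; auto. apply (rsum_delta n 5 (fun _ => 1)). lia.
    + intros v Hv. unfold path_adj, indicator, path_cut.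
      destruct (Nat.ltb_spec u v), (Nat.eqb_spec (S u) v), (Nat.eqb_spec (S v) u),
        (Nat.leb_spec 5 u), (Nat.leb_spec 5 v), (Nat.eqb_spec u 4), (Nat.eqb_spec v 5);
        simpl; try lia; ring.
Qed.

Lemma path_cut_low m : rsum (5 + m) (fun u => 1 - indicator path_cut u) = 5.
Proof.
  induction m as [|m IH]; [unfold indicator, path_cut; simpl; lra |].
  replace (5 + S m)%nat with (S (5 + m)) by lia.
  change (rsum (S ?k) ?g) with (rsum k g + g k). rewrite IH.
  unfold indicator, path_cut. destruct (Nat.leb_spec 5 (5 + m)); [lra | lia].
Qed.

Lemma lambda1_path_lt_half n : (10 <= n)%nat -> lambda1 n path_adj < 1 / 2.
Proof.
  intros Hn.
  assert (Hdeg : forall u, (u < n)%nat -> 1 <= deg n path_adj u)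
    by (intros; apply deg_ge1_connected; auto using path_simple, path_connected; lia).
  set (A := indicator path_cut).
  assert (Hlow : rsum n (fun u => 1 - A u) = 5)
    by (replace n with (5 + (n - 5))%nat by lia; apply path_cut_low).
  assert (Htot : rsum n A + rsum n (fun u => 1 - A u) = INR n).
  { rewrite <- rsum_plus, <- rsum_const1. apply rsum_ext; intros; ring. }
  assert (H10 : 10 <= INR n) by (replace 10 with (INR 10) by (simpl; lra); apply le_INR; lia).
  assert (Hx : rsum n A <= deg_sum n path_adj A).
  { apply rsum_le; intros. pose proof (Hdeg i H). unfold A, indicator.
    destruct (path_cut i); lra. }
  assert (Ht : rsum n (fun u => 1 - A u) <= vol n path_adj - deg_sum n path_adj A).
  { unfold vol, deg_sum. rewrite <- rsum_minus. apply rsum_le; intros.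
    pose proof (Hdeg i H). unfold A, indicator. destruct (path_cut i); lra. }
  pose proof (lambda1_le_cut n path_adj path_cut 5 0 ltac:(lia) ltac:(lia)
                eq_refl eq_refl ltac:(fold A; lra) ltac:(fold A; lra)) as H.
  fold A in H. rewrite path_cut_energy in H by lia.
  set (x := deg_sum n path_adj A) in *. set (t := vol n path_adj - x) in *.
  assert (1 / x <= 1 / 5) by (apply Rmult_le_compat_l; [lra | apply Rinv_le_contravar; lra]).
  assert (1 / t <= 1 / 5) by (apply Rmult_le_compat_l; [lra | apply Rinv_le_contravar; lra]).
  lra.
Qed.

(** * Removing an edge *)

Section RemoveEdge.

Variables (n : nat) (adj : nat -> nat -> bool) (w z : nat).
Hypotheses (Hwz : adj w z = true) (Hzw : adj z w = true) (Hne : w <> z)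
  (Hw : (w < n)%nat) (Hz : (z < n)%nat).

Let r := remove_edge adj w z.

Lemma deg_remove_edge u :
  deg n r u = deg n adj u - (if (u =? w)%nat then 1 else 0) - (if (u =? z)%nat then 1 else 0).
Proof.
  unfold deg.
  rewrite (rsum_ext n _ (fun v => (if adj u v then 1 else 0)
    - (if (u =? w)%nat then (if (v =? z)%nat then 1 else 0) else 0)
    - (if (u =? z)%nat then (if (v =? w)%nat then 1 else 0) else 0))).
  - rewrite !rsum_minus, !rsum_if, (rsum_delta n z (fun _ => 1)), (rsum_delta n w (fun _ => 1))
      by auto.
    reflexivity.
  - intros v _. unfold r, remove_edge.
    destruct (Nat.eqb_spec u w), (Nat.eqb_spec v z), (Nat.eqb_spec u z), (Nat.eqb_spec v w);
      destruct (adj u v) eqn:A; subst; simpl; try lia; try congruence; lra.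
Qed.

Lemma deg_sum_remove_edge f : deg_sum n r f = deg_sum n adj f - f w - f z.
Proof.
  unfold deg_sum.
  rewrite (rsum_ext n _ (fun u => f u * deg n adj u
    - (if (u =? w)%nat then f u else 0) - (if (u =? z)%nat then f u else 0))).
  - rewrite !rsum_minus, !rsum_delta by auto. reflexivity.
  - intros u _. rewrite deg_remove_edge. destruct (u =? w)%nat, (u =? z)%nat; ring.
Qed.

Lemma weighted_norm_remove_edge f :
  weighted_norm n r f = weighted_norm n adj f - f w ^ 2 - f z ^ 2.
Proof.
  unfold weighted_norm.
  rewrite (rsum_ext n _ (fun u => f u ^ 2 * deg n adj u
    - (if (u =? w)%nat then f u ^ 2 else 0) - (if (u =? z)%nat then f u ^ 2 else 0))).
  - rewrite !rsum_minus, (rsum_delta n w (fun u => f u ^ 2)), (rsum_delta n z (fun u => f u ^ 2))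
      by auto.
    reflexivity.
  - intros u _. rewrite deg_remove_edge. destruct (u =? w)%nat, (u =? z)%nat; ring.
Qed.

(* Edges are counted once, as ordered pairs [u < v]; the removed pair is [(w, z)] or
   [(z, w)] according to which endpoint is smaller. *)
Lemma edge_energy_remove_edge f :
  edge_energy n r f = edge_energy n adj f - (f w - f z) ^ 2.
Proof.
  unfold edge_energy.
  rewrite (rsum_ext n _ (fun u =>
      rsum n (fun v => if ((u <? v)%nat && adj u v)%bool then (f u - f v) ^ 2 else 0)
    - (if (u =? w)%nat then (if (w <? z)%nat then (f u - f z) ^ 2 else 0) else 0)
    - (if (u =? z)%nat then (if (z <? w)%nat then (f u - f w) ^ 2 else 0) else 0))).
  - rewrite !rsum_minus, (rsum_delta n w (fun u => if (w <? z)%nat then (f u - f z) ^ 2 else 0)),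
      (rsum_delta n z (fun u => if (z <? w)%nat then (f u - f w) ^ 2 else 0)) by auto.
    destruct (Nat.ltb_spec w z), (Nat.ltb_spec z w); try lia; ring.
  - intros u _.
    rewrite (rsum_ext n _ (fun v => (if ((u <? v)%nat && adj u v)%bool then (f u - f v) ^ 2 else 0)
      - (if (u =? w)%nat then (if (v =? z)%nat then
           (if (w <? z)%nat then (f u - f v) ^ 2 else 0) else 0) else 0)
      - (if (u =? z)%nat then (if (v =? w)%nat then
           (if (z <? w)%nat then (f u - f v) ^ 2 else 0) else 0) else 0))).
    + rewrite !rsum_minus, !rsum_if,
        (rsum_delta n z (fun v => if (w <? z)%nat then (f u - f v) ^ 2 else 0)),
        (rsum_delta n w (fun v => if (z <? w)%nat then (f u - f v) ^ 2 else 0)) by auto.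
      destruct (u =? w)%nat, (u =? z)%nat; ring.
    + intros v _. unfold r, remove_edge.
      destruct (Nat.eqb_spec u w), (Nat.eqb_spec v z), (Nat.eqb_spec u z), (Nat.eqb_spec v w);
        destruct (adj u v) eqn:A; destruct (Nat.ltb_spec u v), (Nat.ltb_spec w z), (Nat.ltb_spec z w);
        subst; simpl; try lia; try congruence; ring.
Qed.

Lemma remove_edge_simple : simple_graph n adj -> simple_graph n r.
Proof.
  intros [Sy Ir]. split; intros; unfold r, remove_edge.
  - rewrite Sy by auto. destruct (u =? w)%nat, (v =? z)%nat, (u =? z)%nat, (v =? w)%nat; reflexivity.
  - rewrite Ir by auto. reflexivity.
Qed.

End RemoveEdge.

Lemma lambda1_remove_sign_change_edge n adj f w z :
  simple_graph n adj -> connected n adj -> (2 <= n)%nat ->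
  harmonic n adj f -> lambda1 n adj < 1 / 2 ->
  (w < n)%nat -> (z < n)%nat -> adj w z = true -> f w < 0 -> 0 <= f z ->
  connected n (remove_edge adj w z) ->
  lambda1 n (remove_edge adj w z) < lambda1 n adj.
Proof.
  intros Sg Cg Hn [Hnz [Hor Hray]] Hhalf Hw Hz Hwz Hfw Hfz Cr.
  assert (Hzw : adj z w = true) by (destruct Sg as [Sy _]; rewrite Sy; auto).
  assert (Hne : w <> z) by (intros ->; destruct Sg as [_ Ir]; rewrite Ir in Hwz; discriminate || auto).
  set (r := remove_edge adj w z) in *.
  assert (Sr : simple_graph n r) by (apply remove_edge_simple; auto).
  assert (Dg : forall u, (u < n)%nat -> 1 <= deg n adj u) by (intros; apply deg_ge1_connected; auto).
  assert (Dr : forall u, (u < n)%nat -> 1 <= deg n r u) by (intros; apply deg_ge1_connected; auto).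
  assert (HV : 2 <= vol n r).
  { assert (INR n <= vol n r) by (rewrite <- rsum_const1; apply rsum_le; auto).
    assert (2 <= INR n) by (replace 2 with (INR 2) by (simpl; lra); apply le_INR; lia). lra. }
  set (lam := lambda1 n adj) in *.
  set (D := weighted_norm n adj f). set (E := edge_energy n adj f).
  assert (HD : 0 < D) by exact (weighted_norm_pos n adj f Dg Hnz).
  assert (HE : E = lam * D) by (unfold rayleigh in Hray; fold E D in Hray; rewrite <- Hray; field; lra).
  assert (Hlam0 : 0 <= lam) by (rewrite <- Hray; apply rayleigh_nonneg).
  assert (HS : deg_sum n r f = - f w - f z)
    by (unfold r; rewrite deg_sum_remove_edge; auto; unfold degree_orth in Hor; fold (deg_sum n adj f) in Hor; lra).
  pose proof (lambda1_le_centered n r f w z ltac:(lra) Hw Hz ltac:(lra)) as B.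
  set (Q := weighted_norm n r f - deg_sum n r f ^ 2 / vol n r) in *.
  assert (HQ : 0 < Q).
  { unfold Q. rewrite <- weighted_norm_centered by lra.
    apply weighted_norm_pos; auto. apply (nonzero_centered n r f w z); auto; lra. }
  assert (HQD : Q = D - f w ^ 2 - f z ^ 2 - (f w + f z) ^ 2 / vol n r).
  { unfold Q. rewrite HS. unfold r. rewrite weighted_norm_remove_edge by auto. fold D r. field. lra. }
  unfold r in B. rewrite edge_energy_remove_edge in B by auto. fold r E Q in B.
  set (q := (f w + f z) ^ 2 / vol n r) in *.
  assert (Hq : q * vol n r = (f w + f z) ^ 2) by (unfold q; field; lra).
  assert (Hq0 : 0 <= q) by (apply Rdiv_nonneg; [apply pow2_ge_0 | lra]).
  assert (Hqb : q <= f w ^ 2 + f z ^ 2) by nra.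
  assert (Hlt : E - (f w - f z) ^ 2 < lam * Q) by (rewrite HQD, HE; fold q; nra).
  assert ((E - (f w - f z) ^ 2) / Q < lam).
  { apply Rmult_lt_reg_r with Q; auto. unfold Rdiv. rewrite Rmult_assoc, Rinv_l by lra. lra. }
  lra.
Qed.

Theorem mainTheorem9 :
  exists n0 : nat, forall n : nat, (n0 <= n)%nat ->
  forall adj : nat -> nat -> bool,
    simple_graph n adj -> connected n adj ->
    lambda1 n adj = alpha n ->
    forall f : nat -> R, harmonic n adj f ->
    forall w z : nat, (w < n)%nat -> (z < n)%nat -> adj w z = true ->
    f w < 0 -> 0 <= f z ->
    ~ connected n (remove_edge adj w z).
Proof.
  exists 10%nat. intros n Hn adj Sg Cg Hl f Hf w z Hw Hz Hwz Hfw Hfz Cr.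
  assert (Hhalf : lambda1 n adj < 1 / 2).
  { rewrite Hl. pose proof (alpha_le_lambda1 n path_adj (path_simple n) (path_connected n)).
    pose proof (lambda1_path_lt_half n Hn). lra. }
  pose proof (lambda1_remove_sign_change_edge n adj f w z Sg Cg ltac:(lia) Hf Hhalf
                Hw Hz Hwz Hfw Hfz Cr).
  pose proof (alpha_le_lambda1 n _ (remove_edge_simple n adj w z Sg) Cr). lra.
Qed.
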